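(* Let $H$ be a connected graph with a pendant vertex $w$, and let $G$ be the graph formed from $H$ by adding two new vertices $u$ and $v$ which are adjacent to $w$ and to each other but have no other neighbors. If $\overline{H}$ has an orthogonal vector representation in $\mathbb{R}^3$ consisting of pairwise linearly independent vectors, then so does $\overline{G}$.
   Context: All graphs are finite and simple; $\overline{G}$ denotes the complement of $G$. A pendant vertex is a vertex of degree 1. An orthogonal vector representation of a graph $G=(V,E)$ in $\mathbb{R}^d$ is a map $\phi:V\to\mathbb{R}^d$ with $\phi(v)\neq 0$ for all $v$, and for distinct $u,v$: $\langle\phi(u),\phi(v)\rangle=0$ if and only if $uv\notin E$. *)

From HB Require Import structures.
From mathcomp Require Import all_boot all_order all_algebra.
From mathcomp Require Import reals.
Set Implicit Arguments. Unset Strict Implicit. Unset Printing Implicit Defensive.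
Import Order.TTheory GRing.Theory Num.Theory.
Local Open Scope ring_scope.

Definition simple_graph (T : finType) (e : rel T) : Prop :=
  symmetric e /\ irreflexive e.

Definition compl_graph (T : finType) (e : rel T) : rel T :=
  fun x y => (x != y) && ~~ e x y.

Definition connected_graph (T : finType) (e : rel T) : Prop :=
  forall x y : T, connect e x y.

Definition pendant (T : finType) (e : rel T) (w : T) : Prop :=
  #|[pred y | e w y]| = 1%N.

(* G built from H by adding u := inr true, v := inr false,
   both adjacent to w and to each other, and to nothing else. *)
Definition add_triangle (T : finType) (e : rel T) (w : T) : rel (T + bool) :=
  fun a b => match a, b with
  | inl x, inl y => e x y
  | inl x, inr _ => x == w
  | inr _, inl y => y == w
  | inr b1, inr b2 => b1 != b2
  end.

Definition dot3 (R : realType) (x y : 'rV[R]_3) : R := \sum_(i < 3) x 0 i * y 0 i.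

Definition orth_rep3 (R : realType) (T : finType) (e : rel T) (phi : T -> 'rV[R]_3) : Prop :=
  (forall x, phi x != 0) /\
  (forall x y, x != y -> (dot3 (phi x) (phi y) == 0) = ~~ e x y).

Definition pairwise_lin_indep (R : realType) (T : finType) (phi : T -> 'rV[R]_3) : Prop :=
  forall x y, x != y -> free [:: phi x; phi y].

(* In the complement of G, u and v are adjacent to all vertices of H except w, and
   not to each other: their vectors must be orthogonal to each other and to the
   vector a of w, and to no other vector of the representation. Complete a to an
   orthogonal basis a, p, q of R^3. A vector b off the line of a has a nonzero
   projection on the plane of p and q, i.e. (b.p, b.q) <> (0, 0), so u = p + t q and
   v = t |q|^2 p - |p|^2 q, which are orthogonal, avoid every such b once t is large.
   Each pair of vectors is independent because some vector is orthogonal to one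
   member of the pair but not to the other. *)

From HB Require Import structures.
From mathcomp Require Import all_boot all_order all_algebra.
From mathcomp Require Import reals.
From mathcomp Require Import ring lra.
Set Implicit Arguments. Unset Strict Implicit. Unset Printing Implicit Defensive.
Import Order.TTheory GRing.Theory Num.Theory.
Local Open Scope ring_scope.

Section DotProduct.
Variable R : realFieldType.

Definition dotmx n (x y : 'rV[R]_n) : R := \sum_(i < n) x 0 i * y 0 i.
Definition orthmx n (x y : 'rV[R]_n) : bool := dotmx x y == 0.
Arguments orthmx {n}.

Section FixedDimension.
Variable n : nat.
Implicit Types x y z : 'rV[R]_n.

Lemma dotmxC x y : dotmx x y = dotmx y x.
Proof. by apply: eq_bigr => i _; rewrite mulrC. Qed.

Lemma orthmxC x y : orthmx x y = orthmx y x.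
Proof. by rewrite /orthmx dotmxC. Qed.

Lemma dotmxDl x y z : dotmx (x + y) z = dotmx x z + dotmx y z.
Proof. by rewrite -big_split; apply: eq_bigr => i _; rewrite mxE mulrDl. Qed.

Lemma dotmxZl a x y : dotmx (a *: x) y = a * dotmx x y.
Proof. by rewrite mulr_sumr; apply: eq_bigr => i _; rewrite mxE mulrA. Qed.

Lemma dotmxBl x y z : dotmx (x - y) z = dotmx x z - dotmx y z.
Proof. by rewrite dotmxDl -scaleN1r dotmxZl mulN1r. Qed.

Lemma dotmx0l y : dotmx 0 y = 0.
Proof. by rewrite /dotmx big1 // => i _; rewrite mxE mul0r. Qed.

Lemma dotmx_suml I r (P : pred I) (F : I -> 'rV[R]_n) y :
  dotmx (\sum_(i <- r | P i) F i) y = \sum_(i <- r | P i) dotmx (F i) y.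
Proof. by elim/big_rec2: _ => [|i a u _ <-]; rewrite ?dotmx0l ?dotmxDl. Qed.

Lemma dotmx_eq0 x : (dotmx x x == 0) = (x == 0).
Proof.
apply/idP/eqP => [|->]; last by rewrite dotmx0l.
rewrite psumr_eq0 => [/allP x0|i _]; last by rewrite -expr2 sqr_ge0.
by apply/rowP => i; have := x0 i (mem_index_enum i); rewrite mulf_eq0 orbb mxE => /eqP.
Qed.

Lemma orthmx_self x : orthmx x x = (x == 0).
Proof. exact: dotmx_eq0. Qed.

Lemma orthogonal_free (s : seq 'rV[R]_n) : 0 \notin s -> pairwise orthmx s -> free s.
Proof.
elim: s => [|x s IHs]; first by rewrite nil_free.
rewrite inE negb_or eq_sym free_cons /= => /andP[x0 s0] /andP[/allP xs /(IHs s0)->].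
rewrite andbT; apply: contra x0 => /(@coord_span _ _ _ (in_tuple s)) x_span.
rewrite -orthmx_self /orthmx {1}x_span dotmx_suml big1 // => i _.
by rewrite dotmxZl dotmxC (eqP (xs _ (mem_nth 0 _))) ?mulr0.
Qed.

Lemma size_free_le (s : seq 'rV[R]_n) : free s -> (size s <= n)%N.
Proof. by move/eqP <-; rewrite (leq_trans (dimvS (subvf _))) // dimvf /dim /= mul1n. Qed.

Lemma exists_orthogonal (s : seq 'rV[R]_n) :
  (size s < n)%N -> exists2 v, v != 0 & all (orthmx v) s.
Proof.
move=> lt_s_n; pose A := \matrix_(i < size s) s`_i.
exists (nz_row (kermx A^T)).
  rewrite nz_row_eq0 -mxrank_eq0 mxrank_ker -lt0n subn_gt0.
  exact: leq_ltn_trans (rank_leq_col _) lt_s_n.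
have /sub_kermxP vA0 := nz_row_sub (kermx A^T).
apply/(all_nthP 0) => i lt_i_s; apply/eqP.
move/rowP/(_ (Ordinal lt_i_s)): vA0; rewrite !mxE => <-.
by apply: eq_bigr => j _; rewrite !mxE.
Qed.

Lemma free_pair_witness x y z : y != 0 -> orthmx y z -> ~~ orthmx x z -> free [:: x; y].
Proof.
move=> y0 yz; rewrite free_cons seq1_free y0 andbT span_seq1.
by apply: contra => /vlineP[k ->]; rewrite /orthmx dotmxZl (eqP yz) mulr0.
Qed.

Lemma dotmx_neq0l x y : dotmx x y != 0 -> x != 0.
Proof. by apply: contraNneq => ->; rewrite dotmx0l. Qed.

End FixedDimension.

(* Otherwise the component [r] of [b] orthogonal to [a] would extend [a :: s] to
   [n + 2] pairwise orthogonal nonzero vectors. *)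
Lemma orthogonal_line n (a b : 'rV[R]_n.+1) (s : seq 'rV[R]_n.+1) :
  size s = n -> 0 \notin a :: s -> pairwise orthmx (a :: s) -> all (orthmx b) s ->
  (b \in <[a]>)%VS.
Proof.
move=> size_s nz_as /= /andP[orth_as orth_s] /allP orth_bs.
have a0 : a != 0 by move: nz_as; rewrite inE negb_or eq_sym => /andP[].
pose c := dotmx b a / dotmx a a; pose r := b - c *: a.
suff r0 : r == 0 by apply/vlineP; exists c; apply/eqP; rewrite -subr_eq0.
apply/negPn/negP => r0.
suff /size_free_le : free [:: r, a & s] by rewrite /= size_s ltnn.
apply: orthogonal_free; first by rewrite inE negb_or eq_sym r0.
rewrite /= orth_as orth_s !andbT; apply/andP; split.
  by rewrite /orthmx dotmxBl dotmxZl divfK ?dotmx_eq0 // subrr.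
apply/allP => y sy; move/allP/(_ y sy): orth_as.
by rewrite /orthmx dotmxBl dotmxZl (eqP (orth_bs y sy)) => /eqP->; rewrite mulr0 subrr.
Qed.

Lemma exists_common_nonroot (I : finType) (P : pred I) (f g : I -> R) :
  (forall i, P i -> (f i != 0) || (g i != 0)) ->
  exists t, forall i, P i -> f i + t * g i != 0.
Proof.
move=> nz_fg; pose t := 1 + \sum_i `|f i| / `|g i|.
exists t => i Pi.
have t_gt : `|f i| / `|g i| < t.
  rewrite /t (bigD1 i) //=.
  have : 0 <= \sum_(j | j != i) `|f j| / `|g j|.
    by apply: sumr_ge0 => j _; rewrite divr_ge0.
  lra.
have t_gt0 : 0 < t by apply: le_lt_trans t_gt; rewrite divr_ge0.
have [g0 | g0] := eqVneq (g i) 0.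
  by move: (nz_fg i Pi); rewrite g0 eqxx orbF mulr0 addr0.
apply: contraTneq t_gt => /eqP; rewrite addr_eq0 => /eqP->.
by rewrite normrN normrM (gtr0_norm t_gt0) mulfK ?normr_eq0 // ltxx.
Qed.

Lemma exists_orthogonal_pair_avoiding (I : finType) (P : pred I) (a : 'rV[R]_3)
    (b : I -> 'rV[R]_3) :
  a != 0 -> (forall i, P i -> b i \notin <[a]>%VS) ->
  exists u v, [/\ u != 0, v != 0, orthmx u v, orthmx u a & orthmx v a] /\
    forall i, P i -> ~~ orthmx u (b i) && ~~ orthmx v (b i).
Proof.
move=> a0 b_notin.
have [p p0 /andP[pa _]] := exists_orthogonal (s := [:: a]) isT.
have [q q0 /and3P[qa qp _]] := exists_orthogonal (s := [:: a; p]) isT.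
have b_pq i : P i -> ~~ orthmx p (b i) || ~~ orthmx q (b i).
  move=> Pi; rewrite -negb_and; apply: contra (b_notin i Pi) => /andP[pb qb].
  apply: (orthogonal_line (s := [:: p; q])) => //.
    by rewrite !inE !(eq_sym 0) (negbTE a0) (negbTE p0) (negbTE q0).
  by rewrite /= orthmxC pa orthmxC qa orthmxC qp.
  by rewrite /= orthmxC pb orthmxC qb.
pose c := dotmx q q; pose d := dotmx p p.
have c0 : c != 0 by rewrite dotmx_eq0.
have d0 : d != 0 by rewrite dotmx_eq0.
(* For [u = p + t q] and [v = t c p - d q], the products [u . b i] and [v . b i] are
   [f (i, true) + t g (i, true)] and [f (i, false) + t g (i, false)]. *)
pose f (ib : I * bool) := if ib.2 then dotmx p (b ib.1) else - (d * dotmx q (b ib.1)).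
pose g (ib : I * bool) := if ib.2 then dotmx q (b ib.1) else c * dotmx p (b ib.1).
have [|t t_ok] := @exists_common_nonroot _ (fun ib => P ib.1) f g.
  case=> i [] /= Pi; have := b_pq i Pi; rewrite /f /g /orthmx //= oppr_eq0.
  by case/orP=> nz; [rewrite orbC|]; rewrite mulf_neq0.
have pq : dotmx p q = 0 by rewrite dotmxC; apply/eqP.
have dot_u y : dotmx (p + t *: q) y = dotmx p y + t * dotmx q y.
  by rewrite dotmxDl dotmxZl.
have dot_v y : dotmx ((t * c) *: p - d *: q) y = - (d * dotmx q y) + t * (c * dotmx p y).
  by rewrite dotmxBl !dotmxZl mulrA addrC.
exists (p + t *: q), ((t * c) *: p - d *: q); split; first split.
- by apply: (@dotmx_neq0l _ _ p); rewrite dot_u dotmxC pq mulr0 addr0.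
- by apply: (@dotmx_neq0l _ _ q); rewrite dot_v pq !mulr0 addr0 oppr_eq0 mulf_neq0.
- rewrite /orthmx dot_u (dotmxC p) (dotmxC q) !dot_v (dotmxC q p) pq -/c -/d.
  by apply/eqP; ring.
- by rewrite /orthmx dot_u (eqP pa) (eqP qa) mulr0 addr0.
- by rewrite /orthmx dot_v (eqP pa) (eqP qa) !mulr0 oppr0 addr0.
move=> i Pi; have := t_ok (i, true) Pi; have := t_ok (i, false) Pi.
by rewrite /orthmx dot_u dot_v /f /g /= => -> ->.
Qed.

End DotProduct.

Lemma orthmx_dot3 (R : realType) (x y : 'rV[R]_3) : orthmx x y = (dot3 x y == 0).
Proof. by []. Qed.

Section TriangleExtension.
Variables (R : realType) (T : finType) (e : rel T) (w : T).
Variables (phi : T -> 'rV[R]_3) (u v : 'rV[R]_3).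
Hypotheses (phi_rep : orth_rep3 (compl_graph e) phi) (phi_indep : pairwise_lin_indep phi).
Hypotheses (u0 : u != 0) (v0 : v != 0) (uv : orthmx u v).
Hypotheses (u_w : orthmx u (phi w)) (v_w : orthmx v (phi w)).
Hypothesis uv_phi : forall x, x != w -> ~~ orthmx u (phi x) && ~~ orthmx v (phi x).

Definition triangle_rep (s : T + bool) : 'rV[R]_3 :=
  match s with inl x => phi x | inr true => u | inr false => v end.

Let inr_neq0 b : triangle_rep (inr b) != 0.
Proof. by case: b. Qed.

Let inr_orth b : orthmx (triangle_rep (inr b)) (triangle_rep (inr (~~ b))).
Proof. by case: b; rewrite //= orthmxC. Qed.

Let inr_orth_phi b x : orthmx (triangle_rep (inr b)) (phi x) = (x == w).
Proof.
have [->|xw] := eqVneq x w; first by case: b => /=.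
by have /andP[/negbTE u_x /negbTE v_x] := uv_phi xw; case: b.
Qed.

Lemma triangle_rep_orth : orth_rep3 (compl_graph (add_triangle e w)) triangle_rep.
Proof.
case: phi_rep => phi0 phi_orth; split=> [[x|b] |s s' ne_ss']; [exact: phi0 | exact: inr_neq0|].
rewrite /compl_graph ne_ss' negbK -orthmx_dot3.
case: s s' ne_ss' => [x|b] [y|b'] //= ne.
- by rewrite orthmx_dot3 phi_orth // /compl_graph ne negbK.
- by rewrite orthmxC inr_orth_phi.
- by rewrite inr_orth_phi.
- by case: b b' ne => -[] //; rewrite orthmxC.
Qed.

Lemma triangle_rep_indep : pairwise_lin_indep triangle_rep.
Proof.
case: phi_rep => phi0 _.
have old_new x b : free [:: phi x; triangle_rep (inr b)].
  have [->|xw] := eqVneq x w.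
    apply: (free_pair_witness (z := phi w)) => //; first by case: b.
    by rewrite orthmx_self phi0.
  apply: (free_pair_witness (z := triangle_rep (inr (~~ b)))) => //.
  by rewrite orthmxC inr_orth_phi (negbTE xw).
case=> [x|b] [y|b'] ne.
- by apply: phi_indep; apply: contraNneq ne => ->.
- exact: old_new.
- by rewrite (perm_free (introT permPl (perm_catC [:: _] [:: _]))) old_new.
- have -> : b' = ~~ b by case: b b' ne => -[].
  apply: (free_pair_witness (z := triangle_rep (inr b))); first exact: inr_neq0.
    by rewrite orthmxC.
  by rewrite orthmx_self.
Qed.

End TriangleExtension.

Theorem lemma4p6 (R : realType) (T : finType) (e : rel T) (w : T) :
  simple_graph e -> connected_graph e -> pendant e w ->
  (exists phi : T -> 'rV[R]_3,
     orth_rep3 (compl_graph e) phi /\ pairwise_lin_indep phi) ->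
  exists psi : T + bool -> 'rV[R]_3,
     orth_rep3 (compl_graph (add_triangle e w)) psi /\ pairwise_lin_indep psi.
Proof.
move=> _ _ _ [phi [phi_rep phi_indep]]; have [phi0 _] := phi_rep.
have phi_notin x : x != w -> phi x \notin <[phi w]>%VS.
  by move=> xw; have := phi_indep x w xw; rewrite free_cons span_seq1 => /andP[].
have [u [v [[u0 v0 uv u_w v_w] uv_phi]]] :=
  exists_orthogonal_pair_avoiding (phi0 w) phi_notin.
exists (triangle_rep phi u v); split.
- exact: triangle_rep_orth phi_rep u0 v0 uv u_w v_w uv_phi.
- exact: triangle_rep_indep phi_rep phi_indep u0 v0 uv u_w v_w uv_phi.
Qed.
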